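(* Let $\mathcal{H}$ be an infinite-dimensional complex separable Hilbert space. Every compact operator $K \in \mathcal{B}(\mathcal{H})$ is a norm limit of commutators $AB - BA$ of compact nilpotent operators $A, B \in \mathcal{B}(\mathcal{H})$; that is, for every $\varepsilon > 0$ there are compact $A, B$ with $A^k = 0 = B^k$ for some $k \ge 1$ and $\|K - (AB - BA)\| < \varepsilon$. *)

(* The infinite-dimensional complex separable
   Hilbert space is realised concretely as l^2(N; C) (every such space is
   unitarily isomorphic to it, and the statement is invariant under unitary
   equivalence). *)
From Stdlib Require Import Reals.
From Coquelicot Require Import Coquelicot.
Open Scope R_scope.

Definition vec := nat -> C.

Definition l2 (x : vec) : Prop := ex_series (fun n => (Cmod (x n)) ^ 2).

Definition l2norm (x : vec) : R := sqrt (Series (fun n => (Cmod (x n)) ^ 2)).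

Definition vadd (x y : vec) : vec := fun n => Cplus (x n) (y n).
Definition vsub (x y : vec) : vec := fun n => Cminus (x n) (y n).
Definition vscal (a : C) (x : vec) : vec := fun n => Cmult a (x n).

(* an operator is a map on sequences; only its restriction to l^2 matters *)
Definition op := vec -> vec.

Definition bounded_op (T : op) : Prop :=
  (forall x, l2 x -> l2 (T x)) /\
  (forall a x y, l2 x -> l2 y ->
     forall n, T (vadd (vscal a x) y) n = Cplus (Cmult a (T x n)) (T y n)) /\
  (exists M, forall x, l2 x -> l2norm (T x) <= M * l2norm x).

Definition compact_op (T : op) : Prop :=
  bounded_op T /\
  forall u : nat -> vec, (forall k, l2 (u k)) ->
    (exists M, forall k, l2norm (u k) <= M) ->
    exists phi : nat -> nat, (forall k, (phi k < phi (S k))%nat) /\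
      exists y, l2 y /\
        is_lim_seq (fun k => l2norm (vsub (T (u (phi k))) y)) 0.

Definition comp (A B : op) : op := fun x => A (B x).
Definition op_sub (S T : op) : op := fun x => vsub (S x) (T x).
Definition commutator (A B : op) : op := op_sub (comp A B) (comp B A).

Definition op_pow (A : op) (k : nat) : op := fun x => Nat.iter k A x.
Definition pow_zero (A : op) (k : nat) : Prop :=
  forall x, l2 x -> forall n, op_pow A k x n = 0%C.

Definition opnorm_lt (T : op) (eps : R) : Prop :=
  exists c, c < eps /\ forall x, l2 x -> l2norm (T x) <= c * l2norm x.

From Pilot Require Import Defs.
From Stdlib Require Import Reals Lra Lia FunctionalExtensionality Classical ClassicalEpsilon.
From Coquelicot Require Import Coquelicot.
Open Scope R_scope.

(* Let Q_N be the projection onto the coordinates >= N.  For a compact K both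
   Q_N K and K Q_N tend to 0 in norm (the latter because K maps a bounded
   sequence of vectors supported on consecutive disjoint blocks to a sequence
   whose only possible norm limit is 0), so K is close to its compression K_N
   to the first N coordinates.  Cutting l^2 into blocks of length N, the
   operator acting as K_N on block 0 and as -K_N/m on blocks 1..m is the
   commutator of two nilpotent finite-rank block shifts, and the blocks -K_N/m
   are negligible once m is large. *)

Definition sqnorm (x : vec) : R := Series (fun n => Cmod (x n) ^ 2).

Definition vzero : vec := fun _ => RtoC 0.

Lemma l2norm_sqnorm (x : vec) : l2norm x = sqrt (sqnorm x).
Proof. reflexivity. Qed.

Lemma Cmod_sq_ge0 (a : C) : 0 <= Cmod a ^ 2.
Proof. apply pow2_ge_0. Qed.

Lemma Cmod_add_sq_le (a b : C) (t : R) : 0 < t ->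
  Cmod (a + b)%C ^ 2 <= (1 + t) * Cmod a ^ 2 + (1 + / t) * Cmod b ^ 2.
Proof.
  intros Ht.
  pose proof (Cmod_triangle a b); pose proof (Cmod_ge_0 (a + b)%C).
  pose proof (Cmod_ge_0 a); pose proof (Cmod_ge_0 b).
  set (p := Cmod a) in *; set (q := Cmod b) in *; set (r := Cmod (a + b)%C) in *.
  assert (Hamgm : 2 * p * q <= t * p ^ 2 + / t * q ^ 2).
  { assert (Hsq : 0 <= (t * p - q) ^ 2 * / t)
      by (apply Rmult_le_pos; [apply pow2_ge_0 | left; apply Rinv_0_lt_compat; lra]).
    replace ((t * p - q) ^ 2 * / t) with (t * p ^ 2 - 2 * p * q + / t * q ^ 2) in Hsq
      by (field; lra).
    lra. }
  nra.
Qed.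

Lemma Series_ge0 (a : nat -> R) : (forall n, 0 <= a n) -> ex_series a -> 0 <= Series a.
Proof.
  intros Ha Hex.
  replace 0 with (Series (fun n => 0 * a n)) by (rewrite Series_scal_l; ring).
  apply Series_le; [|exact Hex]. intros n. specialize (Ha n). lra.
Qed.

Lemma sqnorm_ge0 (x : vec) : l2 x -> 0 <= sqnorm x.
Proof. intros Hx. apply Series_ge0; [intros; apply Cmod_sq_ge0 | exact Hx]. Qed.

Lemma sqnorm_ext (x y : vec) : (forall n, x n = y n) -> sqnorm x = sqnorm y.
Proof. intros H. apply Series_ext. intros n. now rewrite H. Qed.

Lemma l2_sqnorm_dominated (x z y : vec) (p q : R) : l2 x -> l2 z -> 0 <= p -> 0 <= q ->
  (forall n, Cmod (y n) ^ 2 <= p * Cmod (x n) ^ 2 + q * Cmod (z n) ^ 2) ->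
  l2 y /\ sqnorm y <= p * sqnorm x + q * sqnorm z.
Proof.
  intros Hx Hz Hp Hq H.
  assert (Hpx : ex_series (fun n => p * Cmod (x n) ^ 2))
    by exact (ex_series_scal_l p (fun n => Cmod (x n) ^ 2) Hx).
  assert (Hqz : ex_series (fun n => q * Cmod (z n) ^ 2))
    by exact (ex_series_scal_l q (fun n => Cmod (z n) ^ 2) Hz).
  assert (Hb : ex_series (fun n => p * Cmod (x n) ^ 2 + q * Cmod (z n) ^ 2))
    by exact (ex_series_plus _ _ Hpx Hqz).
  split.
  - refine (ex_series_le (fun n => Cmod (y n) ^ 2) _ _ Hb). intros n.
    change (norm (Cmod (y n) ^ 2)) with (Rabs (Cmod (y n) ^ 2)).
    rewrite Rabs_pos_eq by apply Cmod_sq_ge0. apply H.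
  - unfold sqnorm. rewrite <- !Series_scal_l, <- Series_plus by assumption.
    apply Series_le; [|exact Hb]. intros n. split; [apply Cmod_sq_ge0 | apply H].
Qed.

Lemma Cmod_sq_le_sqnorm (x : vec) (n : nat) : l2 x -> Cmod (x n) ^ 2 <= sqnorm x.
Proof.
  intros Hx. unfold sqnorm. rewrite (Series_incr_n _ (S n)) by (lia || exact Hx).
  simpl Init.Nat.pred.
  assert (Hrest : 0 <= Series (fun k => Cmod (x (S n + k)%nat) ^ 2)).
  { apply Series_ge0; [intros; apply Cmod_sq_ge0|].
    now apply (ex_series_incr_n (fun k => Cmod (x k) ^ 2) (S n)). }
  destruct n as [|n]; cbn [sum_f_R0]; [lra|].
  assert (0 <= sum_f_R0 (fun k => Cmod (x k) ^ 2) n)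
    by (apply cond_pos_sum; intros; apply Cmod_sq_ge0).
  lra.
Qed.

Lemma is_series_finite (a : nat -> R) (L : nat) : (forall k, (L <= k)%nat -> a k = 0) ->
  is_series a (sum_f_R0 a L).
Proof.
  intros H. apply is_series_Reals. intros e He. exists L. intros n Hn.
  replace (sum_f_R0 a n) with (sum_f_R0 a L).
  - unfold Rdist. rewrite Rminus_diag, Rabs_R0. lra.
  - induction Hn; [reflexivity|]. rewrite tech5, H by lia. lra.
Qed.

Lemma l2_of_support_lt (x : vec) (L : nat) : (forall n, (L <= n)%nat -> x n = RtoC 0) -> l2 x.
Proof.
  intros Hs. exists (sum_f_R0 (fun k => Cmod (x k) ^ 2) L). apply is_series_finite.
  intros k Hk. rewrite Hs, Cmod_0 by exact Hk. ring.
Qed.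

Lemma sqnorm_le_of_support_lt (x : vec) (L : nat) (c : R) :
  (forall n, (L <= n)%nat -> x n = RtoC 0) -> (forall n, Cmod (x n) ^ 2 <= c) ->
  sqnorm x <= INR (S L) * c.
Proof.
  intros Hs Hc.
  assert (Hser : is_series (fun k => Cmod (x k) ^ 2) (sum_f_R0 (fun k => Cmod (x k) ^ 2) L)).
  { apply is_series_finite. intros k Hk. rewrite Hs, Cmod_0 by exact Hk. ring. }
  unfold sqnorm. rewrite (is_series_unique _ _ Hser). clear Hser Hs.
  induction L as [|L IH].
  - specialize (Hc 0%nat). simpl. lra.
  - rewrite tech5, S_INR. specialize (Hc (S L)). lra.
Qed.

Lemma l2_vzero : l2 vzero.
Proof. apply (l2_of_support_lt _ 0). reflexivity. Qed.

Lemma sqnorm_vzero : sqnorm vzero = 0.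
Proof.
  apply Rle_antisym; [|apply sqnorm_ge0, l2_vzero].
  replace 0 with (INR 1 * 0) by ring.
  apply (sqnorm_le_of_support_lt _ 0); [reflexivity|].
  intros n. unfold vzero. rewrite Cmod_0. simpl. lra.
Qed.

Lemma vzero_of_sqnorm_le0 (x : vec) : l2 x -> sqnorm x <= 0 -> x = vzero.
Proof.
  intros Hx H. apply functional_extensionality. intros n. apply Cmod_eq_0.
  pose proof (Cmod_sq_le_sqnorm x n Hx). pose proof (Cmod_ge_0 (x n)). nra.
Qed.

Lemma l2_vscal (a : C) (x : vec) : l2 x -> l2 (vscal a x).
Proof.
  intros Hx. apply (l2_sqnorm_dominated x x _ (Cmod a ^ 2) 0); auto using Cmod_sq_ge0; [lra|].
  intros n. unfold vscal. rewrite Cmod_mult. lra.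
Qed.

Lemma sqnorm_vscal (a : C) (x : vec) : sqnorm (vscal a x) = Cmod a ^ 2 * sqnorm x.
Proof.
  unfold sqnorm, vscal. rewrite <- Series_scal_l. apply Series_ext.
  intros n. rewrite Cmod_mult. ring.
Qed.

Lemma l2_vadd (x y : vec) : l2 x -> l2 y -> l2 (vadd x y).
Proof.
  intros Hx Hy. apply (l2_sqnorm_dominated x y _ 2 2); auto; try lra.
  intros n. pose proof (Cmod_add_sq_le (x n) (y n) 1 Rlt_0_1) as Hn. rewrite Rinv_1 in Hn.
  unfold vadd. lra.
Qed.

Lemma sqnorm_vadd_le (x y : vec) (t : R) : l2 x -> l2 y -> 0 < t ->
  sqnorm (vadd x y) <= (1 + t) * sqnorm x + (1 + / t) * sqnorm y.
Proof.
  intros Hx Hy Ht. pose proof (Rinv_0_lt_compat t Ht).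
  apply l2_sqnorm_dominated; auto; try lra.
  intros n. now apply Cmod_add_sq_le.
Qed.

Lemma sqnorm_vadd_le2 (x y : vec) : l2 x -> l2 y ->
  sqnorm (vadd x y) <= 2 * sqnorm x + 2 * sqnorm y.
Proof.
  intros Hx Hy. pose proof (sqnorm_vadd_le x y 1 Hx Hy Rlt_0_1) as Hle.
  rewrite Rinv_1 in Hle. lra.
Qed.

Lemma vsub_vadd_opp (x y : vec) : vsub x y = vadd x (vscal (RtoC (-1)) y).
Proof.
  apply functional_extensionality. intros n. unfold vsub, vadd, vscal.
  apply injective_projections; simpl; ring.
Qed.

Lemma vscal_1 (x : vec) : vscal (RtoC 1) x = x.
Proof. apply functional_extensionality. intros n. unfold vscal. ring. Qed.

Lemma vadd_vzero_r (x : vec) : vadd x vzero = x.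
Proof. apply functional_extensionality. intros n. unfold vadd, vzero. ring. Qed.

Lemma l2_vsub (x y : vec) : l2 x -> l2 y -> l2 (vsub x y).
Proof. intros. rewrite vsub_vadd_opp. auto using l2_vadd, l2_vscal. Qed.

Lemma sqnorm_vsub_le2 (x y : vec) : l2 x -> l2 y ->
  sqnorm (vsub x y) <= 2 * sqnorm x + 2 * sqnorm y.
Proof.
  intros Hx Hy. rewrite vsub_vadd_opp.
  eapply Rle_trans; [apply sqnorm_vadd_le2; auto using l2_vscal|].
  rewrite sqnorm_vscal, Cmod_R, Rabs_m1. lra.
Qed.

Definition proj_head (N : nat) (x : vec) : vec := fun n => if Nat.ltb n N then x n else RtoC 0.
Definition proj_tail (N : nat) (x : vec) : vec := fun n => if Nat.ltb n N then RtoC 0 else x n.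

Lemma l2_sqnorm_restrict (x y : vec) : l2 x -> (forall n, y n = RtoC 0 \/ y n = x n) ->
  l2 y /\ sqnorm y <= sqnorm x.
Proof.
  intros Hx Hy. destruct (l2_sqnorm_dominated x x y 1 0) as [Hl Hle]; auto; try lra.
  - intros n. pose proof (Cmod_sq_ge0 (x n)).
    destruct (Hy n) as [-> | ->]; rewrite ?Cmod_0; simpl; lra.
  - split; [exact Hl | lra].
Qed.

Lemma proj_head_add_tail (N : nat) (x : vec) : vadd (proj_head N x) (proj_tail N x) = x.
Proof.
  apply functional_extensionality. intros n. unfold vadd, proj_head, proj_tail.
  destruct (Nat.ltb n N); ring.
Qed.

Lemma proj_head_restrict (N : nat) (x : vec) n :
  proj_head N x n = RtoC 0 \/ proj_head N x n = x n.
Proof. unfold proj_head. destruct (Nat.ltb n N); auto. Qed.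

Lemma proj_tail_restrict (N : nat) (x : vec) n :
  proj_tail N x n = RtoC 0 \/ proj_tail N x n = x n.
Proof. unfold proj_tail. destruct (Nat.ltb n N); auto. Qed.

Lemma l2_proj_head (N : nat) (x : vec) : l2 (proj_head N x).
Proof.
  apply (l2_of_support_lt _ N). intros n Hn. unfold proj_head.
  now replace (Nat.ltb n N) with false by (symmetry; apply Nat.ltb_ge; lia).
Qed.

Lemma l2_proj_tail (N : nat) (x : vec) : l2 x -> l2 (proj_tail N x).
Proof. intros Hx. apply (l2_sqnorm_restrict x); auto using proj_tail_restrict. Qed.

Lemma sqnorm_proj_head_le (N : nat) (x : vec) : l2 x -> sqnorm (proj_head N x) <= sqnorm x.
Proof. intros Hx. apply (l2_sqnorm_restrict x); auto using proj_head_restrict. Qed.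

Lemma sqnorm_proj_tail_le (N : nat) (x : vec) : l2 x -> sqnorm (proj_tail N x) <= sqnorm x.
Proof. intros Hx. apply (l2_sqnorm_restrict x); auto using proj_tail_restrict. Qed.

Lemma sqnorm_proj_tail_vanishes (y : vec) : l2 y ->
  forall e, 0 < e -> exists N0, forall N, (N0 <= N)%nat -> sqnorm (proj_tail N y) < e.
Proof.
  intros Hy e He.
  pose proof (Series_correct _ Hy) as Hs. apply is_series_Reals in Hs.
  destruct (Hs e He) as [N0 HN0]. specialize (HN0 N0 (le_n N0)).
  exists (S N0). intros N HN.
  assert (Hmono : sqnorm (proj_tail N y) <= sqnorm (proj_tail (S N0) y)).
  { apply l2_sqnorm_restrict; [now apply l2_proj_tail|]. intros n. unfold proj_tail.
    destruct (Nat.ltb n N) eqn:E1, (Nat.ltb n (S N0)) eqn:E2; auto.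
    apply Nat.ltb_ge in E1; apply Nat.ltb_lt in E2; lia. }
  assert (Hrest : sqnorm (proj_tail (S N0) y) = Series (fun k => Cmod (y (S N0 + k)%nat) ^ 2)).
  { unfold sqnorm. rewrite (Series_incr_n_aux _ (S N0)).
    - apply Series_ext. intros k. unfold proj_tail.
      now replace (Nat.ltb (S N0 + k) (S N0)) with false by (symmetry; apply Nat.ltb_ge; lia).
    - intros k Hk. unfold proj_tail.
      replace (Nat.ltb k (S N0)) with true by (symmetry; apply Nat.ltb_lt; lia).
      rewrite Cmod_0. ring. }
  pose proof (Series_incr_n _ (S N0) ltac:(lia) Hy) as Hsplit. simpl Init.Nat.pred in Hsplit.
  unfold Rdist in HN0. apply Rabs_def2 in HN0. unfold sqnorm in *. lra.
Qed.

Section BoundedOp.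
Variable T : op.
Hypothesis HT : bounded_op T.

Lemma bounded_op_l2 (x : vec) : l2 x -> l2 (T x).
Proof. apply HT. Qed.

Lemma bounded_op_lin (a : C) (x y : vec) : l2 x -> l2 y ->
  T (vadd (vscal a x) y) = vadd (vscal a (T x)) (T y).
Proof.
  intros Hx Hy. apply functional_extensionality. intros n. now apply HT.
Qed.

Lemma bounded_op_vzero : T vzero = vzero.
Proof.
  pose proof (bounded_op_lin (-1)%C vzero vzero l2_vzero l2_vzero) as H.
  replace (vadd (vscal (-1)%C vzero) vzero) with vzero in H
    by (apply functional_extensionality; intros n; unfold vadd, vscal, vzero; ring).
  apply functional_extensionality. intros n.
  transitivity ((-1) * T vzero n + T vzero n)%C; [exact (f_equal (fun v => v n) H)|].
  unfold vzero. ring.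
Qed.

Lemma bounded_op_scal (a : C) (x : vec) : l2 x -> T (vscal a x) = vscal a (T x).
Proof.
  intros Hx. pose proof (bounded_op_lin a x vzero Hx l2_vzero) as H.
  now rewrite bounded_op_vzero, !vadd_vzero_r in H.
Qed.

Lemma bounded_op_add (x y : vec) : l2 x -> l2 y -> T (vadd x y) = vadd (T x) (T y).
Proof.
  intros Hx Hy. pose proof (bounded_op_lin (RtoC 1) x y Hx Hy) as H.
  now rewrite !vscal_1 in H.
Qed.

Lemma bounded_op_sqnorm_bound : exists M, 0 <= M /\ forall x, l2 x -> sqnorm (T x) <= M * sqnorm x.
Proof.
  destruct HT as [Hl [_ [M HM]]]. exists (M ^ 2). split; [apply pow2_ge_0|].
  intros x Hx. specialize (HM x Hx). rewrite !l2norm_sqnorm in HM.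
  pose proof (sqnorm_ge0 _ Hx). pose proof (sqnorm_ge0 _ (Hl x Hx)).
  pose proof (sqrt_pos (sqnorm (T x))). pose proof (sqrt_pos (sqnorm x)).
  rewrite <- (sqrt_sqrt (sqnorm (T x))), <- (sqrt_sqrt (sqnorm x)) by lra.
  nra.
Qed.

End BoundedOp.

Lemma bounded_op_of_sqnorm_bound (T : op) (M : R) :
  (forall x, l2 x -> l2 (T x)) ->
  (forall a x y, l2 x -> l2 y -> forall n, T (vadd (vscal a x) y) n = (a * T x n + T y n)%C) ->
  (forall x, l2 x -> sqnorm (T x) <= M * sqnorm x) -> bounded_op T.
Proof.
  intros Hl Hlin HM. split; [exact Hl|]. split; [exact Hlin|].
  exists (sqrt (Rabs M)). intros x Hx. rewrite !l2norm_sqnorm.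
  rewrite <- sqrt_mult by (apply Rabs_pos || now apply sqnorm_ge0).
  apply sqrt_le_1_alt. eapply Rle_trans; [now apply HM|].
  apply Rmult_le_compat_r; [now apply sqnorm_ge0 | apply Rle_abs].
Qed.

Lemma opnorm_lt_of_sqnorm_le (T : op) (c eps : R) : 0 <= c -> c < eps ^ 2 -> 0 < eps ->
  (forall x, l2 x -> sqnorm (T x) <= c * sqnorm x) -> opnorm_lt T eps.
Proof.
  intros Hc Hce Heps HT. exists (sqrt c). split.
  - rewrite <- (sqrt_pow2 eps) by lra. apply sqrt_lt_1_alt. lra.
  - intros x Hx. rewrite !l2norm_sqnorm, <- sqrt_mult by (auto using sqnorm_ge0).
    now apply sqrt_le_1_alt, HT.
Qed.

Lemma bounded_op_comp (A B : op) : bounded_op A -> bounded_op B -> bounded_op (Defs.comp A B).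
Proof.
  intros HA HB.
  destruct (bounded_op_sqnorm_bound A HA) as [MA [HMA0 HMA]].
  destruct (bounded_op_sqnorm_bound B HB) as [MB [HMB0 HMB]].
  apply (bounded_op_of_sqnorm_bound _ (MA * MB)).
  - intros x Hx. unfold Defs.comp. auto using bounded_op_l2.
  - intros a x y Hx Hy n. unfold Defs.comp.
    rewrite (bounded_op_lin B HB) by assumption.
    now rewrite (bounded_op_lin A HA) by auto using bounded_op_l2.
  - intros x Hx. unfold Defs.comp. eapply Rle_trans; [apply HMA; auto using bounded_op_l2|].
    rewrite Rmult_assoc. now apply Rmult_le_compat_l, HMB.
Qed.

Lemma proj_tail_bounded (N : nat) : bounded_op (proj_tail N).
Proof.
  apply (bounded_op_of_sqnorm_bound _ 1).
  - apply l2_proj_tail.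
  - intros a x y _ _ n. unfold proj_tail, vadd, vscal. destruct (Nat.ltb n N); ring.
  - intros x Hx. rewrite Rmult_1_l. now apply sqnorm_proj_tail_le.
Qed.

Lemma sqnorm_bound_of_unit_ball (T : op) (c : R) : bounded_op T ->
  (forall x, l2 x -> sqnorm x <= 1 -> sqnorm (T x) <= c) ->
  forall x, l2 x -> sqnorm (T x) <= c * sqnorm x.
Proof.
  intros HT Hc x Hx. destruct (Rle_lt_dec (sqnorm x) 0) as [Hle0 | Hpos].
  - rewrite (vzero_of_sqnorm_le0 x Hx Hle0), bounded_op_vzero, sqnorm_vzero by exact HT. lra.
  - set (r := sqrt (sqnorm x)).
    assert (Hr : 0 < r) by now apply sqrt_lt_R0.
    assert (Hr2 : r ^ 2 = sqnorm x) by (unfold r; simpl; rewrite Rmult_1_r; apply sqrt_sqrt; lra).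
    set (u := vscal (RtoC (/ r)) x).
    assert (Hu : sqnorm u = 1).
    { unfold u. rewrite sqnorm_vscal, Cmod_R, Rabs_pos_eq by (left; now apply Rinv_0_lt_compat).
      rewrite <- Hr2. field. lra. }
    assert (Hxu : x = vscal (RtoC r) u).
    { apply functional_extensionality. intros n. unfold u, vscal.
      apply injective_projections; simpl; field; lra. }
    rewrite Hxu at 1. rewrite (bounded_op_scal T HT) by (apply l2_vscal, Hx).
    rewrite sqnorm_vscal, Cmod_R, Rabs_pos_eq by lra. rewrite <- Hr2.
    assert (HTu : sqnorm (T u) <= c) by (apply Hc; [apply l2_vscal, Hx | lra]).
    pose proof (pow2_ge_0 r). nra.
Qed.

Definition increasing (phi : nat -> nat) : Prop := forall k, (phi k < phi (S k))%nat.

Lemma increasing_le (phi : nat -> nat) : increasing phi ->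
  forall a b, (a <= b)%nat -> (phi a <= phi b)%nat.
Proof. intros H a b Hab. induction Hab; [lia|]. specialize (H m). lia. Qed.

Lemma increasing_ge_id (phi : nat -> nat) : increasing phi -> forall k, (k <= phi k)%nat.
Proof. intros H k. induction k; [lia|]. specialize (H k). lia. Qed.

Lemma increasing_comp (phi psi : nat -> nat) :
  increasing phi -> increasing psi -> increasing (fun k => phi (psi k)).
Proof.
  intros H1 H2 k.
  pose proof (increasing_le phi H1 (S (psi k)) (psi (S k)) (H2 k)). specialize (H1 (psi k)). lia.
Qed.

Lemma eventually_forall_lt (L : nat) (P : nat -> nat -> Prop) :
  (forall n, (n < L)%nat -> exists K, forall k, (K <= k)%nat -> P n k) ->
  exists K, forall k, (K <= k)%nat -> forall n, (n < L)%nat -> P n k.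
Proof.
  induction L as [|L IH]; intros H; [exists 0%nat; intros; lia|].
  destruct IH as [K1 H1]; [intros n Hn; apply H; lia|].
  destruct (H L ltac:(lia)) as [K2 H2]. exists (Nat.max K1 K2). intros k Hk n Hn.
  destruct (Nat.eq_dec n L) as [->|]; [apply H2 | apply H1]; lia.
Qed.

Lemma R_bounded_converging_subseq (r : nat -> R) (M : R) : (forall k, Rabs (r k) <= M) ->
  exists phi, increasing phi /\ exists l, forall e, 0 < e ->
    exists K, forall k, (K <= k)%nat -> Rabs (r (phi k) - l) < e.
Proof.
  intros HM. destruct (Bolzano_Weierstrass r (fun c => -M <= c <= M) (compact_P3 (-M) M)) as [l Hl].
  { intros k. specialize (HM k). pose proof (Rle_abs (r k)). pose proof (Rle_abs (- r k)).
    rewrite Rabs_Ropp in *. lra. }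
  assert (Hnext : forall p : nat * nat,
            exists q, (fst p <= q)%nat /\ Rabs (r q - l) < / INR (S (snd p))).
  { intros [N k]. simpl.
    assert (Hpos : 0 < / INR (S k)) by (apply Rinv_0_lt_compat, lt_0_INR; lia).
    destruct (Hl (fun y => Rabs (y - l) < / INR (S k)) N) as [q [Hq1 Hq2]].
    - exists (mkposreal _ Hpos). intros y Hy. exact Hy.
    - exists q; auto. }
  destruct (choice _ Hnext) as [g Hg].
  set (phi := fix phi k := match k with O => g (0%nat, 0%nat) | S k' => g (S (phi k'), S k') end).
  exists phi. split.
  - intros k. simpl. destruct (Hg (S (phi k), S k)) as [H _]. simpl in H. lia.
  - exists l. intros e He. destruct (INR_archimed e 1 He) as [K HK].
    exists K. intros k Hk.
    assert (Hclose : Rabs (r (phi k) - l) < / INR (S k)).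
    { destruct k; [apply (Hg (0%nat, 0%nat)) | apply (Hg (S (phi k), S k))]. }
    assert (Hsmall : / INR (S k) < e).
    { apply le_INR in Hk. rewrite S_INR. pose proof (pos_INR K).
      apply (Rmult_lt_reg_r (INR k + 1)); [lra|]. rewrite Rinv_l by lra. nra. }
    lra.
Qed.

Lemma C_bounded_converging_subseq (z : nat -> C) (M : R) : (forall k, Cmod (z k) <= M) ->
  exists phi, increasing phi /\ exists l : C, forall e, 0 < e ->
    exists K, forall k, (K <= k)%nat -> Cmod (z (phi k) - l)%C < e.
Proof.
  intros HM.
  destruct (R_bounded_converging_subseq (fun k => fst (z k)) M) as [p1 [Hp1 [l1 H1]]].
  { intros k. eapply Rle_trans; [apply re_le_Cmod | apply HM]. }
  destruct (R_bounded_converging_subseq (fun k => snd (z (p1 k))) M) as [p2 [Hp2 [l2 H2]]].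
  { intros k. eapply Rle_trans; [|apply (HM (p1 k))].
    eapply Rle_trans; [apply Rmax_r | apply Rmax_Cmod]. }
  exists (fun k => p1 (p2 k)). split; [now apply increasing_comp|].
  exists (l1, l2). intros e He.
  destruct (H1 (e / 2)) as [K1 HK1]; [lra|]. destruct (H2 (e / 2)) as [K2 HK2]; [lra|].
  exists (Nat.max K1 K2). intros k Hk.
  pose proof (increasing_ge_id p2 Hp2 k).
  specialize (HK1 (p2 k) ltac:(lia)). specialize (HK2 k ltac:(lia)).
  assert (Hsqrt2 : sqrt 2 < 2).
  { rewrite <- (sqrt_square 2) at 2 by lra. apply sqrt_lt_1; lra. }
  assert (Hmax : Rmax (Rabs (fst (z (p1 (p2 k))) + - l1))
                      (Rabs (snd (z (p1 (p2 k))) + - l2)) < e / 2)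
    by (apply Rmax_case; assumption).
  eapply Rle_lt_trans; [apply Cmod_2Rmax|]. simpl.
  pose proof (Rabs_pos (fst (z (p1 (p2 k))) + - l1)) as H0.
  pose proof (Rle_trans _ _ _ H0 (Rmax_l _ (Rabs (snd (z (p1 (p2 k))) + - l2)))).
  nra.
Qed.

Lemma Cmod_le_l2norm (x : vec) (n : nat) : l2 x -> Cmod (x n) <= l2norm x.
Proof.
  intros Hx. rewrite l2norm_sqnorm, <- (sqrt_pow2 (Cmod (x n))) by apply Cmod_ge_0.
  apply sqrt_le_1_alt. now apply Cmod_sq_le_sqnorm.
Qed.

Lemma compact_op_converging_subseq (T : op) : compact_op T ->
  forall u : nat -> vec, (forall k, l2 (u k)) -> (forall k, sqnorm (u k) <= 1) ->
  exists phi, increasing phi /\ exists y, l2 y /\ forall e, 0 < e ->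
    exists K, forall k, (K <= k)%nat -> sqnorm (vsub (T (u (phi k))) y) < e.
Proof.
  intros [HT HC] u Hu Hu1.
  destruct (HC u Hu) as [phi [Hphi [y [Hy Hlim]]]].
  { exists 1. intros k. rewrite l2norm_sqnorm, <- sqrt_1. now apply sqrt_le_1_alt. }
  exists phi. split; [exact Hphi|]. exists y. split; [exact Hy|].
  intros e He. apply is_lim_seq_spec in Hlim.
  destruct (Hlim (mkposreal _ (sqrt_lt_R0 e He))) as [K HK]. exists K. intros k Hk.
  specialize (HK k Hk). simpl in HK. rewrite Rminus_0_r, Rabs_pos_eq in HK by apply sqrt_pos.
  now apply sqrt_lt_0_alt.
Qed.

Lemma coords_converging_subseq (v : nat -> vec) (M : R) : (forall k n, Cmod (v k n) <= M) ->
  forall L, exists phi, increasing phi /\ exists y : vec, forall n, (n < L)%nat ->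
    forall e, 0 < e -> exists K, forall k, (K <= k)%nat -> Cmod (v (phi k) n - y n)%C < e.
Proof.
  intros HM L. induction L as [|L [phi [Hphi [y Hy]]]].
  - exists (fun k => k). split; [intros k; lia|]. exists vzero. intros; lia.
  - destruct (C_bounded_converging_subseq (fun k => v (phi k) L) M) as [psi [Hpsi [l Hl]]].
    { intros k. apply HM. }
    exists (fun k => phi (psi k)). split; [now apply increasing_comp|].
    exists (fun n => if Nat.eqb n L then l else y n). intros n Hn e He.
    destruct (Nat.eqb n L) eqn:E.
    + apply Nat.eqb_eq in E. subst n. now apply Hl.
    + apply Nat.eqb_neq in E. destruct (Hy n ltac:(lia) e He) as [K HK].
      exists K. intros k Hk. apply HK. pose proof (increasing_ge_id psi Hpsi k). lia.
Qed.

Lemma is_lim_seq_l2norm_0 (w : nat -> vec) : (forall k, l2 (w k)) ->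
  (forall e, 0 < e -> exists K, forall k, (K <= k)%nat -> sqnorm (w k) < e) ->
  is_lim_seq (fun k => l2norm (w k)) 0.
Proof.
  intros Hw Hsmall. apply is_lim_seq_spec. intros eps.
  destruct (Hsmall (eps ^ 2)) as [K HK]; [apply pow_lt, cond_pos|].
  exists K. intros k Hk.
  rewrite Rminus_0_r, Rabs_pos_eq, l2norm_sqnorm by apply sqrt_pos.
  rewrite <- (sqrt_pow2 eps) by (left; apply cond_pos).
  apply sqrt_lt_1_alt. split; [now apply sqnorm_ge0 | now apply HK].
Qed.

Lemma finite_range_compact (T : op) (L : nat) : bounded_op T ->
  (forall x, l2 x -> forall n, (L <= n)%nat -> T x n = RtoC 0) -> compact_op T.
Proof.
  intros HT Hsupp. split; [exact HT|]. intros u Hu [M HM].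
  destruct HT as [Hl2 [_ [M0 HM0]]].
  assert (Hcoord : forall k n, Cmod (T (u k) n) <= Rabs M0 * M).
  { intros k n. eapply Rle_trans; [apply Cmod_le_l2norm; auto|].
    eapply Rle_trans; [apply HM0; auto|].
    pose proof (sqrt_pos (sqnorm (u k))). specialize (HM k). rewrite l2norm_sqnorm in *.
    pose proof (Rle_abs M0). pose proof (Rabs_pos M0). nra. }
  destruct (coords_converging_subseq _ _ Hcoord L) as [phi [Hphi [y Hy]]].
  exists phi. split; [exact Hphi|]. exists (proj_head L y). split; [apply l2_proj_head|].
  apply is_lim_seq_l2norm_0; [intros k; apply l2_vsub; auto using l2_proj_head|].
  intros e He. set (c := e / (2 * INR (S L))).
  assert (HSL : 0 < INR (S L)) by (apply lt_0_INR; lia).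
  assert (Hc : 0 < c) by (apply Rdiv_lt_0_compat; lra).
  destruct (eventually_forall_lt L (fun n k => Cmod (T (u (phi k)) n - y n)%C ^ 2 < c))
    as [K HK].
  { intros n Hn. destruct (Hy n Hn (sqrt c)) as [K HK]; [now apply sqrt_lt_R0|].
    exists K. intros k Hk. specialize (HK k Hk).
    pose proof (Cmod_ge_0 (T (u (phi k)) n - y n)%C).
    rewrite <- (sqrt_sqrt c) by lra. simpl. nra. }
  exists K. intros k Hk. specialize (HK k Hk).
  apply (Rle_lt_trans _ (INR (S L) * c)); [|unfold c; field_simplify; lra].
  apply (sqnorm_le_of_support_lt _ L).
  - intros n Hn. unfold vsub, proj_head. rewrite Hsupp by auto.
    replace (Nat.ltb n L) with false by (symmetry; apply Nat.ltb_ge; lia). ring.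
  - intros n. unfold vsub, proj_head. destruct (Nat.ltb n L) eqn:E.
    + apply Nat.ltb_lt in E. now apply Rlt_le, HK.
    + replace (T (u (phi k)) n - RtoC 0)%C with (RtoC 0)
        by (rewrite Hsupp by (auto; apply Nat.ltb_ge, E); ring).
      rewrite Cmod_0. simpl. lra.
Qed.

Lemma proj_tail_compact_small_on_ball (K : op) : compact_op K ->
  forall d, 0 < d -> exists N0, forall N, (N0 <= N)%nat ->
  forall x, l2 x -> sqnorm x <= 1 -> sqnorm (proj_tail N (K x)) <= d.
Proof.
  intros HK d Hd. apply NNPP. intros Hno.
  assert (Hbad : forall j, exists p : nat * vec, (j <= fst p)%nat /\ l2 (snd p) /\
            sqnorm (snd p) <= 1 /\ d < sqnorm (proj_tail (fst p) (K (snd p)))).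
  { intros j. apply NNPP. intros Hn. apply Hno. exists j. intros N HN x Hx Hx1.
    apply Rnot_lt_le. intros Hlt. apply Hn. now exists (N, x). }
  destruct (choice _ Hbad) as [f Hf].
  destruct (compact_op_converging_subseq K HK (fun j => snd (f j))) as [phi [Hphi [y [Hy Hc]]]];
    [intros j; apply Hf.. |].
  destruct (sqnorm_proj_tail_vanishes y Hy (d / 4)) as [N1 HN1]; [lra|].
  destruct (Hc (d / 4)) as [K1 HK1]; [lra|].
  set (k := Nat.max N1 K1). specialize (HK1 k ltac:(lia)).
  destruct (Hf (phi k)) as [HNk [Hx [_ Hbig]]].
  set (N := fst (f (phi k))) in *. set (x := snd (f (phi k))) in *.
  assert (HKx : l2 (K x)) by now apply (bounded_op_l2 K (proj1 HK)).
  specialize (HN1 N ltac:(pose proof (increasing_ge_id phi Hphi k); lia)).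
  assert (Hsplit : proj_tail N (K x) = vadd (proj_tail N (vsub (K x) y)) (proj_tail N y)).
  { apply functional_extensionality. intros n. unfold proj_tail, vadd, vsub.
    destruct (Nat.ltb n N); ring. }
  pose proof (sqnorm_vadd_le2 (proj_tail N (vsub (K x) y)) (proj_tail N y)) as Hle.
  pose proof (sqnorm_proj_tail_le N (vsub (K x) y)) as Htail.
  rewrite <- Hsplit in Hle.
  specialize (Hle ltac:(auto using l2_proj_tail, l2_vsub) ltac:(auto using l2_proj_tail)).
  specialize (Htail ltac:(auto using l2_vsub)). lra.
Qed.

Lemma proj_tail_compact_small (K : op) : compact_op K ->
  forall d, 0 < d -> exists N0, forall N, (N0 <= N)%nat ->
  forall x, l2 x -> sqnorm (proj_tail N (K x)) <= d * sqnorm x.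
Proof.
  intros HK d Hd. destruct (proj_tail_compact_small_on_ball K HK d Hd) as [N0 HN0].
  exists N0. intros N HN.
  apply (sqnorm_bound_of_unit_ball (fun x => proj_tail N (K x))); [|now apply HN0].
  exact (bounded_op_comp _ _ (proj_tail_bounded N) (proj1 HK)).
Qed.

Fixpoint vsum (f : nat -> vec) (m : nat) : vec :=
  match m with O => vzero | S m' => vadd (vsum f m') (f m') end.

Lemma l2_vsum (f : nat -> vec) (m : nat) : (forall i, l2 (f i)) -> l2 (vsum f m).
Proof. intros Hf. induction m; simpl; auto using l2_vzero, l2_vadd. Qed.

Lemma bounded_op_vsum (T : op) (f : nat -> vec) (m : nat) : bounded_op T ->
  (forall i, l2 (f i)) -> T (vsum f m) = vsum (fun i => T (f i)) m.
Proof.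
  intros HT Hf. induction m as [|m IH]; simpl; [now apply bounded_op_vzero|].
  rewrite bounded_op_add, IH; auto using l2_vsum.
Qed.

Lemma vsum_vsub_const (f : nat -> vec) (y : vec) (m : nat) :
  vsum (fun i => vsub (f i) y) m = vsub (vsum f m) (vscal (RtoC (INR m)) y).
Proof.
  apply functional_extensionality. intros n. induction m as [|m IH]; simpl vsum.
  - unfold vsub, vscal, vzero. apply injective_projections; simpl; ring.
  - unfold vadd at 1. rewrite IH. unfold vadd, vsub, vscal. rewrite S_INR.
    apply injective_projections; simpl; ring.
Qed.

Lemma sqnorm_vadd_disjoint (x y : vec) (s : nat) : l2 x -> l2 y ->
  (forall n, (s <= n)%nat -> x n = RtoC 0) -> (forall n, (n < s)%nat -> y n = RtoC 0) ->
  sqnorm (vadd x y) = sqnorm x + sqnorm y.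
Proof.
  intros Hx Hy Hxs Hys. unfold sqnorm. rewrite <- Series_plus by assumption.
  apply Series_ext. intros n. unfold vadd.
  destruct (Compare_dec.lt_dec n s) as [Hn|Hn].
  - rewrite (Hys n Hn), Cplus_0_r, Cmod_0. ring.
  - rewrite (Hxs n ltac:(lia)), Cplus_0_l, Cmod_0. ring.
Qed.

Section Blocks.
Variables (s : nat -> nat) (f : nat -> vec).
Hypothesis Hs : forall j, (s j <= s (S j))%nat.
Hypothesis Hf : forall j, l2 (f j).
Hypothesis Hsupp : forall j n, (n < s j)%nat \/ (s (S j) <= n)%nat -> f j n = RtoC 0.

Lemma vsum_blocks_support (m n : nat) : (s m <= n)%nat -> vsum f m n = RtoC 0.
Proof.
  induction m as [|m IH]; intros Hn; simpl; [reflexivity|].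
  unfold vadd. rewrite IH, Hsupp by (specialize (Hs m); lia). ring.
Qed.

Lemma sqnorm_vsum_blocks_le (m : nat) :
  (forall j, sqnorm (f j) <= 1) -> sqnorm (vsum f m) <= INR m.
Proof.
  intros Hf1. induction m as [|m IH]; simpl vsum.
  - rewrite sqnorm_vzero. simpl. lra.
  - rewrite (sqnorm_vadd_disjoint _ _ (s m)); auto using l2_vsum, vsum_blocks_support.
    rewrite S_INR. specialize (Hf1 m). lra.
Qed.

End Blocks.

Lemma sqnorm_vsum_le (f : nat -> vec) (c : R) (m : nat) :
  (forall i, l2 (f i)) -> (forall i, (i < m)%nat -> sqnorm (f i) <= c) ->
  sqnorm (vsum f m) <= INR m ^ 2 * c.
Proof.
  intros Hf Hc. induction m as [|m IH]; simpl vsum.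
  - rewrite sqnorm_vzero. simpl. lra.
  - specialize (IH ltac:(auto)). specialize (Hc m ltac:(lia)).
    destruct (Nat.eq_dec m 0) as [->|Hm].
    + rewrite (sqnorm_ext _ (f 0%nat)) by (intros n; simpl; unfold vadd, vzero; ring). simpl. lra.
    + assert (Hmpos : 0 < INR m) by (apply lt_0_INR; lia).
      eapply Rle_trans; [apply (sqnorm_vadd_le _ _ (/ INR m)); auto using l2_vsum;
                         now apply Rinv_0_lt_compat|].
      rewrite Rinv_inv, S_INR.
      assert (Hinv : 0 < / INR m) by now apply Rinv_0_lt_compat.
      replace ((INR m + 1) ^ 2 * c) with ((1 + / INR m) * (INR m ^ 2 * c) + (1 + INR m) * c)
        by (field; lra).
      pose proof (Rmult_le_compat_l (1 + / INR m) _ _ ltac:(lra) IH).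
      pose proof (Rmult_le_compat_l (1 + INR m) _ _ ltac:(lra) Hc). lra.
Qed.

Section BlockImages.
Variables (T : op) (MT : R) (s : nat -> nat) (x : nat -> vec) (y : vec).
Hypothesis HT : bounded_op T.
Hypothesis HMT0 : 0 <= MT.
Hypothesis HMT : forall v, l2 v -> sqnorm (T v) <= MT * sqnorm v.
Hypothesis Hs : forall j, (s j <= s (S j))%nat.
Hypothesis Hx : forall j, l2 (x j).
Hypothesis Hx1 : forall j, sqnorm (x j) <= 1.
Hypothesis Hsupp : forall j n, (n < s j)%nat \/ (s (S j) <= n)%nat -> x j n = RtoC 0.
Hypothesis Hy : l2 y.

(* [z] is a sum of [m] blocks: [|z|^2 <= m] by orthogonality, while [T z] is
   within [m sqrt eta] of [m y]; hence [m^2 |y|^2 <= 2 MT m + 2 m^2 eta]. *)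
Lemma sqnorm_limit_of_block_images_le (J : nat) (eta : R) :
  (forall j, (J <= j)%nat -> sqnorm (vsub (T (x j)) y) <= eta) ->
  forall m, (1 <= m)%nat -> sqnorm y <= 2 * MT / INR m + 2 * eta.
Proof.
  intros Heta m Hm.
  set (g := fun i => x (i + J)%nat). set (z := vsum g m).
  assert (Hg : forall i, l2 (g i)) by (intros; apply Hx).
  assert (Hz : sqnorm z <= INR m).
  { apply (sqnorm_vsum_blocks_le (fun i => s (i + J)%nat)); auto.
    - intros i n Hn. now apply Hsupp.
    - intros i. apply Hx1. }
  assert (HTz : l2 (T z)) by now apply bounded_op_l2, l2_vsum.
  assert (Herr : sqnorm (vsub (T z) (vscal (RtoC (INR m)) y)) <= INR m ^ 2 * eta).
  { unfold z. rewrite bounded_op_vsum, <- vsum_vsub_const by assumption.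
    apply sqnorm_vsum_le.
    - intros i. apply l2_vsub; auto using bounded_op_l2.
    - intros i _. apply Heta. lia. }
  assert (Hmy : vscal (RtoC (INR m)) y = vsub (T z) (vsub (T z) (vscal (RtoC (INR m)) y))).
  { apply functional_extensionality. intros n. unfold vsub. ring. }
  pose proof (sqnorm_vsub_le2 (T z) (vsub (T z) (vscal (RtoC (INR m)) y))) as Htri.
  rewrite <- Hmy, sqnorm_vscal, Cmod_R, pow2_abs in Htri.
  specialize (Htri HTz ltac:(auto using l2_vsub, l2_vscal)).
  pose proof (HMT z ltac:(now apply l2_vsum)).
  assert (Hmpos : 0 < INR m) by (apply lt_0_INR; lia).
  apply (Rmult_le_reg_l (INR m ^ 2)); [nra|].
  replace (INR m ^ 2 * (2 * MT / INR m + 2 * eta)) with (2 * MT * INR m + 2 * (INR m ^ 2 * eta))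
    by (field; lra).
  pose proof (Rmult_le_compat_l MT _ _ HMT0 Hz). lra.
Qed.

Lemma limit_of_block_images_zero :
  (forall e, 0 < e -> exists J, forall j, (J <= j)%nat -> sqnorm (vsub (T (x j)) y) < e) ->
  sqnorm y = 0.
Proof.
  intros Hlim. apply Rle_antisym; [|now apply sqnorm_ge0].
  apply le_epsilon. intros d Hd.
  destruct (Hlim (d / 4)) as [J HJ]; [lra|].
  destruct (INR_archimed (d / 4) (2 * MT)) as [m Hm]; [lra|].
  pose proof (sqnorm_limit_of_block_images_le J (d / 4)
                (fun j Hj => Rlt_le _ _ (HJ j Hj)) (S m) ltac:(lia)) as Hle.
  assert (Hpos : 0 < INR (S m)) by (apply lt_0_INR; lia).
  assert (Hsmall : 2 * MT / INR (S m) <= d / 4).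
  { apply (Rmult_le_reg_r (INR (S m))); [exact Hpos|].
    unfold Rdiv. rewrite Rmult_assoc, Rinv_l, S_INR by lra. rewrite S_INR in Hpos. nra. }
  lra.
Qed.

End BlockImages.

(* Since [K] is bounded, cutting off the far tail of [proj_tail N x] changes its
   image by little: a bad vector can be taken supported on a finite block. *)
Lemma large_image_on_block (K : op) (N : nat) (x : vec) (d : R) : bounded_op K -> 0 < d ->
  l2 x -> sqnorm x <= 1 -> d < sqnorm (K (proj_tail N x)) ->
  exists N' v, (N < N')%nat /\ l2 v /\ sqnorm v <= 1 /\
    (forall n, (n < N)%nat \/ (N' <= n)%nat -> v n = RtoC 0) /\ d / 4 < sqnorm (K v).
Proof.
  intros HK Hd Hx Hx1 Hbig.
  destruct (bounded_op_sqnorm_bound K HK) as [MK [HMK0 HMK]].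
  set (w := proj_tail N x).
  assert (Hw : l2 w) by now apply l2_proj_tail.
  destruct (sqnorm_proj_tail_vanishes w Hw (d / (4 * (MK + 1)))) as [N1 HN1].
  { apply Rdiv_lt_0_compat; lra. }
  set (N' := Nat.max N1 (S N)). specialize (HN1 N' ltac:(lia)).
  exists N', (proj_head N' w). split; [lia|]. split; [apply l2_proj_head|]. split.
  { eapply Rle_trans; [now apply sqnorm_proj_head_le|].
    eapply Rle_trans; [now apply sqnorm_proj_tail_le | exact Hx1]. }
  split.
  { intros n Hn. unfold proj_head, w, proj_tail.
    destruct (Nat.ltb n N') eqn:E1; [|reflexivity].
    apply Nat.ltb_lt in E1. replace (Nat.ltb n N) with true; [reflexivity|].
    symmetry. apply Nat.ltb_lt. lia. }
  assert (Htail : sqnorm (K (proj_tail N' w)) <= d / 4).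
  { eapply Rle_trans; [apply HMK, l2_proj_tail, Hw|].
    pose proof (sqnorm_ge0 _ (l2_proj_tail N' w Hw)).
    apply (Rle_trans _ ((MK + 1) * (d / (4 * (MK + 1))))); [nra|].
    right. field. lra. }
  pose proof (sqnorm_vadd_le2 (K (proj_head N' w)) (K (proj_tail N' w))) as Hsum.
  rewrite <- bounded_op_add, proj_head_add_tail in Hsum by auto using l2_proj_head, l2_proj_tail.
  specialize (Hsum ltac:(auto using bounded_op_l2, l2_proj_head)
                   ltac:(auto using bounded_op_l2, l2_proj_tail)).
  fold w in Hbig. lra.
Qed.

Lemma compact_proj_tail_small_on_ball (K : op) : compact_op K ->
  forall d, 0 < d -> exists N0, forall N, (N0 <= N)%nat ->
  forall x, l2 x -> sqnorm x <= 1 -> sqnorm (K (proj_tail N x)) <= d.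
Proof.
  intros HK d Hd. pose proof (proj1 HK) as HKb. apply NNPP. intros Hno.
  assert (Hblock : forall N0, exists p : nat * vec, (N0 < fst p)%nat /\ l2 (snd p) /\
            sqnorm (snd p) <= 1 /\
            (forall n, (n < N0)%nat \/ (fst p <= n)%nat -> snd p n = RtoC 0) /\
            d / 4 < sqnorm (K (snd p))).
  { intros N0. apply NNPP. intros Hn. apply Hno. exists N0. intros N HN x Hx Hx1.
    apply Rnot_lt_le. intros Hbig.
    destruct (large_image_on_block K N x d HKb Hd Hx Hx1 Hbig)
      as (N' & v & HN' & Hv & Hv1 & Hsupp & HKv).
    apply Hn. exists (N', v). simpl. repeat split; auto; [lia|].
    intros n [Hlt | Hge]; apply Hsupp; lia. }
  destruct (choice _ Hblock) as [g Hg].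
  set (s := fix s j := match j with O => O | S j' => fst (g (s j')) end).
  set (x := fun j => snd (g (s j))).
  assert (Hs : increasing s) by (intros j; apply (Hg (s j))).
  destruct (compact_op_converging_subseq K HK x) as [phi [Hphi [y [Hy Hc]]]];
    [intros j; apply (Hg (s j)) .. |].
  destruct (bounded_op_sqnorm_bound K HKb) as [MK [HMK0 HMK]].
  assert (Hy0 : sqnorm y = 0).
  { apply (limit_of_block_images_zero K MK (fun k => s (phi k)) (fun k => x (phi k)) y);
      auto; try (intros k; apply (Hg (s (phi k)))).
    - intros k. apply increasing_le; [exact Hs | pose proof (Hphi k); lia].
    - intros k n Hn. apply (Hg (s (phi k))).
      pose proof (increasing_le s Hs (S (phi k)) (phi (S k)) (Hphi k)). simpl in *. lia. }
  destruct (Hc (d / 4)) as [K0 HK0]; [lra|]. specialize (HK0 K0 (le_n K0)).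
  rewrite (vzero_of_sqnorm_le0 y Hy ltac:(lra)) in HK0.
  rewrite (sqnorm_ext _ (K (x (phi K0)))) in HK0 by (intros n; unfold vsub, vzero; ring).
  destruct (Hg (s (phi K0))) as (_ & _ & _ & _ & Hbig). fold (x (phi K0)) in Hbig. lra.
Qed.

Lemma compact_proj_tail_small (K : op) : compact_op K ->
  forall d, 0 < d -> exists N0, forall N, (N0 <= N)%nat ->
  forall x, l2 x -> sqnorm (K (proj_tail N x)) <= d * sqnorm x.
Proof.
  intros HK d Hd. destruct (compact_proj_tail_small_on_ball K HK d Hd) as [N0 HN0].
  exists N0. intros N HN.
  apply (sqnorm_bound_of_unit_ball (fun x => K (proj_tail N x))); [|now apply HN0].
  exact (bounded_op_comp _ _ (proj1 HK) (proj_tail_bounded N)).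
Qed.

Lemma compact_of_finite_range (T : op) (L : nat) (c : R) :
  (forall a x y, l2 x -> l2 y -> forall n, T (vadd (vscal a x) y) n = (a * T x n + T y n)%C) ->
  (forall x n, (L <= n)%nat -> T x n = RtoC 0) ->
  (forall x n, l2 x -> Cmod (T x n) ^ 2 <= c * sqnorm x) -> compact_op T.
Proof.
  intros Hlin Hsupp Hc. apply (finite_range_compact _ L); [|intros x _ n Hn; now apply Hsupp].
  apply (bounded_op_of_sqnorm_bound _ (INR (S L) * c)); [|exact Hlin|].
  - intros x _. apply (l2_of_support_lt _ L), Hsupp.
  - intros x Hx. rewrite Rmult_assoc. apply (sqnorm_le_of_support_lt _ L); auto.
Qed.

(* Cut l^2 into consecutive blocks of length [N], numbered from 0, and let
   [K_N] be the compression of [K] to block 0, read on any block through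
   [window].  [block_shift N m] moves block [j] to block [j + 1] for [j < m];
   [weighted_back K N m] maps block [j + 1] to block [j] by [c_j K_N] with
   [c_j = (j - m) / m].  Since [c_0 = -1] and [c_(j-1) - c_j = -1/m], their
   commutator is [K_N] on block 0 minus [block_diag K N m / m], where
   [block_diag] applies [K_N] on each of the blocks [1..m]. *)
Definition window (N s : nat) (x : vec) : vec :=
  fun k => if Nat.ltb k N then x (k + s)%nat else RtoC 0.

Definition block_shift (N m : nat) : op :=
  fun x n => if andb (Nat.leb N n) (Nat.ltb n (S m * N)) then x (n - N)%nat else RtoC 0.

Definition weight (m j : nat) : C := RtoC ((INR j - INR m) / INR m).

Definition weighted_back (K : op) (N m : nat) : op :=
  fun x n => if Nat.ltb n (m * N)
             then (weight m (n / N) * K (window N (S (n / N) * N) x) (n mod N))%C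
             else RtoC 0.

Definition block_diag (K : op) (N m : nat) : op :=
  fun x n => if andb (Nat.leb N n) (Nat.ltb n (S m * N))
             then K (window N (n / N * N) x) (n mod N) else RtoC 0.

Lemma window_lin (N s : nat) (a : C) (x y : vec) :
  window N s (vadd (vscal a x) y) = vadd (vscal a (window N s x)) (window N s y).
Proof.
  apply functional_extensionality. intros k. unfold window, vadd, vscal.
  destruct (Nat.ltb k N); ring.
Qed.

Lemma l2_window (N s : nat) (x : vec) : l2 (window N s x).
Proof.
  apply (l2_of_support_lt _ N). intros n Hn. unfold window.
  now replace (Nat.ltb n N) with false by (symmetry; apply Nat.ltb_ge; lia).
Qed.

Section Compression.
Variables (K : op) (MK : R).
Hypothesis HK : bounded_op K.
Hypothesis HMK0 : 0 <= MK.
Hypothesis HMK : forall x, l2 x -> sqnorm (K x) <= MK * sqnorm x.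

Lemma Cmod_window_image_sq_le (N s : nat) (x : vec) (i : nat) : l2 x ->
  Cmod (K (window N s x) i) ^ 2 <= MK * INR (S N) * sqnorm x.
Proof.
  intros Hx.
  assert (Hwin : sqnorm (window N s x) <= INR (S N) * sqnorm x).
  { apply (sqnorm_le_of_support_lt _ N).
    - intros n Hn. unfold window.
      now replace (Nat.ltb n N) with false by (symmetry; apply Nat.ltb_ge; lia).
    - intros n. unfold window. destruct (Nat.ltb n N); [now apply Cmod_sq_le_sqnorm|].
      rewrite Cmod_0. simpl. rewrite Rmult_0_l. now apply sqnorm_ge0. }
  eapply Rle_trans; [apply Cmod_sq_le_sqnorm, (bounded_op_l2 K HK), l2_window|].
  eapply Rle_trans; [apply HMK, l2_window|].
  rewrite Rmult_assoc. now apply Rmult_le_compat_l.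
Qed.

Lemma sqnorm_block_diag_le (N m : nat) (x : vec) : l2 x ->
  sqnorm (block_diag K N m x) <= INR (S (S m * N)) * (MK * INR (S N) * sqnorm x).
Proof.
  intros Hx. apply (sqnorm_le_of_support_lt _ (S m * N)).
  - intros n Hn. unfold block_diag.
    now replace (Nat.ltb n (S m * N)) with false by (symmetry; apply Nat.ltb_ge; lia);
      rewrite Bool.andb_false_r.
  - intros n. unfold block_diag. destruct (andb _ _); [now apply Cmod_window_image_sq_le|].
    rewrite Cmod_0. simpl. rewrite Rmult_0_l. pose proof (pos_INR (S N)).
    pose proof (sqnorm_ge0 x Hx). apply Rmult_le_pos; [|lra]. now apply Rmult_le_pos.
Qed.

End Compression.

Lemma op_pow_S (T : op) (k : nat) (x : vec) : op_pow T (S k) x = T (op_pow T k x).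
Proof. reflexivity. Qed.

Lemma Cmod_weight_sq_le1 (m j : nat) : (1 <= m)%nat -> (j <= m)%nat -> Cmod (weight m j) ^ 2 <= 1.
Proof.
  intros Hm Hj. unfold weight. rewrite Cmod_R, pow2_abs.
  apply le_INR in Hm, Hj. simpl in Hm. pose proof (pos_INR j).
  assert (-1 <= (INR j - INR m) / INR m <= 0).
  { split; apply (Rmult_le_reg_r (INR m)); try lra; unfold Rdiv;
      rewrite Rmult_assoc, Rinv_l by lra; lra. }
  nra.
Qed.

Lemma weight_0 (m : nat) : (1 <= m)%nat -> weight m 0 = RtoC (-1).
Proof.
  intros Hm. unfold weight. assert (0 < INR m) by (apply lt_0_INR; lia).
  f_equal. simpl. field. lra.
Qed.

Lemma weight_diag (m : nat) : weight m m = RtoC 0.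
Proof. unfold weight. f_equal. unfold Rdiv. ring. Qed.

Lemma weight_sub_succ (m j : nat) : (1 <= m)%nat ->
  (weight m j - weight m (S j))%C = RtoC (- / INR m).
Proof.
  intros Hm. unfold weight. rewrite S_INR.
  assert (0 < INR m) by (apply lt_0_INR; lia).
  apply injective_projections; simpl; [field; lra | ring].
Qed.

Lemma div_mod_add_diag (N n : nat) : (1 <= N)%nat ->
  ((n + N) / N = S (n / N))%nat /\ ((n + N) mod N = n mod N)%nat.
Proof.
  intros HN. replace (n + N)%nat with (n + 1 * N)%nat by lia.
  rewrite Nat.div_add, Nat.Div0.mod_add by lia. split; [lia | reflexivity].
Qed.

Lemma block_shift_compact (N m : nat) : compact_op (block_shift N m).
Proof.
  apply (compact_of_finite_range _ (S m * N) 1).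
  - intros a x y _ _ n. unfold block_shift, vadd, vscal. destruct (andb _ _); ring.
  - intros x n Hn. unfold block_shift.
    replace (Nat.ltb n (S m * N)) with false by (symmetry; apply Nat.ltb_ge; lia).
    now rewrite Bool.andb_false_r.
  - intros x n Hx. rewrite Rmult_1_l. unfold block_shift.
    destruct (andb _ _); [now apply Cmod_sq_le_sqnorm|].
    rewrite Cmod_0. simpl. rewrite Rmult_0_l. now apply sqnorm_ge0.
Qed.

Lemma block_shift_nilpotent (N m : nat) : pow_zero (block_shift N m) (S m).
Proof.
  assert (Hlow : forall k x n, (n < k * N)%nat -> op_pow (block_shift N m) k x n = RtoC 0).
  { induction k as [|k IH]; intros x n Hn; [simpl in Hn; lia|].
    rewrite op_pow_S. unfold block_shift at 1.
    destruct (Nat.leb N n) eqn:E; simpl; [|reflexivity].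
    destruct (Nat.ltb n _); [|reflexivity].
    apply IH. apply Nat.leb_le in E. simpl in Hn. lia. }
  intros x _ n. destruct (Compare_dec.lt_dec n (S m * N)) as [Hn|Hn]; [now apply Hlow|].
  rewrite op_pow_S. unfold block_shift at 1.
  replace (Nat.ltb n (S m * N)) with false by (symmetry; apply Nat.ltb_ge; lia).
  now rewrite Bool.andb_false_r.
Qed.

Section WeightedBack.
Variables (K : op) (MK : R) (N m : nat).
Hypothesis HK : bounded_op K.
Hypothesis HMK0 : 0 <= MK.
Hypothesis HMK : forall x, l2 x -> sqnorm (K x) <= MK * sqnorm x.
Hypothesis HN : (1 <= N)%nat.
Hypothesis Hm : (1 <= m)%nat.

Lemma weighted_back_compact : compact_op (weighted_back K N m).
Proof.
  apply (compact_of_finite_range _ (m * N) (MK * INR (S N))).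
  - intros a x y Hx Hy n. unfold weighted_back. destruct (Nat.ltb n (m * N)); [|ring].
    rewrite window_lin, (bounded_op_lin K HK) by apply l2_window. unfold vadd, vscal. ring.
  - intros x n Hn. unfold weighted_back.
    now replace (Nat.ltb n (m * N)) with false by (symmetry; apply Nat.ltb_ge; lia).
  - intros x n Hx. unfold weighted_back. destruct (Nat.ltb n (m * N)) eqn:E.
    + apply Nat.ltb_lt in E. rewrite Cmod_mult, Rpow_mult_distr.
      assert (Hj : (n / N <= m)%nat) by (apply Nat.lt_le_incl, Nat.Div0.div_lt_upper_bound; lia).
      pose proof (Cmod_weight_sq_le1 m (n / N) Hm Hj).
      pose proof (Cmod_window_image_sq_le K MK HK HMK0 HMK N (S (n / N) * N) x (n mod N) Hx).
      pose proof (Cmod_sq_ge0 (weight m (n / N))).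
      pose proof (Cmod_sq_ge0 (K (window N (S (n / N) * N) x) (n mod N))). nra.
    + rewrite Cmod_0. simpl. rewrite Rmult_0_l. pose proof (pos_INR (S N)).
      apply Rmult_le_pos; [now apply Rmult_le_pos | now apply sqnorm_ge0].
Qed.

(* [B^(k+1)] vanishes from block [m - k] on: each application of [B] lowers
   the block index by one. *)
Lemma weighted_back_nilpotent : pow_zero (weighted_back K N m) (S m).
Proof.
  assert (Hhigh : forall k x n, ((m - k) * N <= n)%nat ->
            op_pow (weighted_back K N m) (S k) x n = RtoC 0).
  { induction k as [|k IH]; intros x n Hn.
    - rewrite op_pow_S. unfold weighted_back at 1.
      now replace (Nat.ltb n (m * N)) with false
        by (symmetry; apply Nat.ltb_ge; rewrite Nat.sub_0_r in Hn; lia).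
    - rewrite op_pow_S. unfold weighted_back at 1.
      destruct (Nat.ltb n (m * N)) eqn:E; [|reflexivity].
      replace (window N (S (n / N) * N) (op_pow (weighted_back K N m) (S k) x)) with vzero.
      + rewrite (bounded_op_vzero K HK). unfold vzero. ring.
      + apply functional_extensionality. intros l. unfold window, vzero.
        destruct (Nat.ltb l N); [|reflexivity]. symmetry. apply IH.
        pose proof (Nat.div_mod_eq n N). pose proof (Nat.mod_upper_bound n N ltac:(lia)).
        assert (m - S k <= n / N)%nat by nia. nia. }
  intros x _ n. apply Hhigh. rewrite Nat.sub_diag. lia.
Qed.

Lemma window_block_shift (x : vec) (j : nat) : (j < m)%nat ->
  window N (S j * N) (block_shift N m x) = window N (j * N) x.
Proof.
  intros Hj. apply functional_extensionality. intros k. unfold window, block_shift.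
  destruct (Nat.ltb k N) eqn:E; [|reflexivity]. apply Nat.ltb_lt in E.
  replace (Nat.leb N (k + S j * N)) with true by (symmetry; apply Nat.leb_le; simpl; lia).
  replace (Nat.ltb (k + S j * N) (S m * N)) with true by (symmetry; apply Nat.ltb_lt; nia).
  simpl. f_equal. lia.
Qed.

Lemma weighted_back_block_shift (x : vec) (n : nat) : (n < S m * N)%nat ->
  weighted_back K N m (block_shift N m x) n
  = (weight m (n / N) * K (window N (n / N * N) x) (n mod N))%C.
Proof.
  intros Hn. unfold weighted_back at 1. destruct (Nat.ltb n (m * N)) eqn:E.
  - apply Nat.ltb_lt in E. rewrite window_block_shift; [reflexivity|].
    apply Nat.Div0.div_lt_upper_bound. nia.
  - apply Nat.ltb_ge in E.
    replace (n / N)%nat with m by (apply Nat.div_unique with (n - m * N)%nat; nia).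
    rewrite weight_diag. ring.
Qed.

Lemma block_shift_weighted_back (x : vec) (n : nat) : (n < m * N)%nat ->
  block_shift N m (weighted_back K N m x) (n + N)%nat = weighted_back K N m x n.
Proof.
  intros Hn. unfold block_shift at 1.
  replace (Nat.leb N (n + N)) with true by (symmetry; apply Nat.leb_le; lia).
  replace (Nat.ltb (n + N) (S m * N)) with true by (symmetry; apply Nat.ltb_lt; simpl; lia).
  simpl. f_equal. lia.
Qed.

Lemma commutator_block_formula (x : vec) : l2 x ->
  commutator (block_shift N m) (weighted_back K N m) x
  = vsub (proj_head N (K (proj_head N x))) (vscal (RtoC (/ INR m)) (block_diag K N m x)).
Proof.
  intros Hx. apply functional_extensionality. intros n.
  unfold commutator, op_sub, Defs.comp, vsub, vscal, proj_head at 1, block_diag.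
  destruct (Compare_dec.lt_dec n N) as [Hlt | Hge].
  - replace (Nat.leb N n) with false by (symmetry; apply Nat.leb_gt; lia).
    replace (Nat.ltb n N) with true by (symmetry; apply Nat.ltb_lt; lia).
    unfold block_shift at 1. replace (Nat.leb N n) with false by (symmetry; apply Nat.leb_gt; lia).
    rewrite weighted_back_block_shift by nia.
    rewrite Nat.div_small, Nat.mod_small, weight_0 by lia.
    replace (window N (0 * N) x) with (proj_head N x)
      by (apply functional_extensionality; intros k; unfold window, proj_head;
          now rewrite Nat.add_0_r).
    simpl. apply injective_projections; simpl; ring.
  - replace (Nat.ltb n N) with false by (symmetry; apply Nat.ltb_ge; lia).
    replace (Nat.leb N n) with true by (symmetry; apply Nat.leb_le; lia). cbn [andb].
    destruct (Nat.ltb n (S m * N)) eqn:E.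
    + apply Nat.ltb_lt in E.
      destruct (Nat.le_exists_sub N n) as [n' [-> _]]; [lia|].
      destruct (div_mod_add_diag N n' HN) as [Hdiv Hmod].
      rewrite block_shift_weighted_back, weighted_back_block_shift by (simpl in E; lia).
      unfold weighted_back.
      replace (Nat.ltb n' (m * N)) with true by (symmetry; apply Nat.ltb_lt; simpl in E; lia).
      rewrite Hdiv, Hmod.
      replace (weight m (n' / N)) with (weight m (S (n' / N)) + RtoC (- / INR m))%C
        by (rewrite <- (weight_sub_succ m (n' / N) Hm); ring).
      rewrite RtoC_opp. ring.
    + apply Nat.ltb_ge in E.
      unfold block_shift at 1.
      replace (Nat.ltb n (S m * N)) with false by (symmetry; apply Nat.ltb_ge; lia).
      rewrite Bool.andb_false_r. unfold weighted_back.
      replace (Nat.ltb n (m * N)) with false by (symmetry; apply Nat.ltb_ge; simpl in E; lia).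
      ring.
Qed.

Lemma approx_error_formula (x : vec) : l2 x ->
  op_sub K (commutator (block_shift N m) (weighted_back K N m)) x
  = vadd (vadd (proj_head N (K (proj_tail N x))) (proj_tail N (K x)))
         (vscal (RtoC (/ INR m)) (block_diag K N m x)).
Proof.
  intros Hx. unfold op_sub. rewrite commutator_block_formula by exact Hx.
  assert (HKx : K x = vadd (K (proj_head N x)) (K (proj_tail N x))).
  { rewrite <- bounded_op_add, proj_head_add_tail by auto using l2_proj_head, l2_proj_tail.
    reflexivity. }
  rewrite HKx. apply functional_extensionality. intros n.
  unfold vsub, vadd, vscal, proj_head, proj_tail. destruct (Nat.ltb n N); ring.
Qed.

Lemma sqnorm_approx_error_le (x : vec) : l2 x ->
  sqnorm (op_sub K (commutator (block_shift N m) (weighted_back K N m)) x)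
  <= 2 * (sqnorm (K (proj_tail N x)) + sqnorm (proj_tail N (K x)))
     + 2 / INR m ^ 2 * (INR (S (S m * N)) * (MK * INR (S N))) * sqnorm x.
Proof.
  intros Hx. rewrite approx_error_formula by exact Hx.
  assert (HKQ : l2 (K (proj_tail N x))) by auto using bounded_op_l2, l2_proj_tail.
  assert (HQK : l2 (proj_tail N (K x))) by auto using bounded_op_l2, l2_proj_tail.
  assert (Hdiag : l2 (block_diag K N m x)).
  { apply (l2_of_support_lt _ (S m * N)). intros n Hn. unfold block_diag.
    now replace (Nat.ltb n (S m * N)) with false by (symmetry; apply Nat.ltb_ge; lia);
      rewrite Bool.andb_false_r. }
  eapply Rle_trans; [apply sqnorm_vadd_le2; auto using l2_vadd, l2_vscal, l2_proj_head|].
  assert (Hsplit : sqnorm (vadd (proj_head N (K (proj_tail N x))) (proj_tail N (K x)))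
                   = sqnorm (proj_head N (K (proj_tail N x))) + sqnorm (proj_tail N (K x))).
  { apply (sqnorm_vadd_disjoint _ _ N); auto using l2_proj_head;
      intros n Hn; unfold proj_head, proj_tail.
    - now replace (Nat.ltb n N) with false by (symmetry; apply Nat.ltb_ge; lia).
    - now replace (Nat.ltb n N) with true by (symmetry; apply Nat.ltb_lt; lia). }
  rewrite Hsplit.
  rewrite sqnorm_vscal, Cmod_R, pow2_abs.
  pose proof (sqnorm_proj_head_le N _ HKQ).
  pose proof (sqnorm_block_diag_le K MK HK HMK0 HMK N m x Hx).
  assert (Hmpos : 0 < INR m) by (apply lt_0_INR; lia).
  replace (2 / INR m ^ 2) with (2 * (/ INR m) ^ 2) by (field; lra).
  pose proof (pow2_ge_0 (/ INR m)). nra.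
Qed.

End WeightedBack.

Lemma defect_coefficient_small (N : nat) (C e : R) : 0 <= C -> 0 < e ->
  exists m, (1 <= m)%nat /\ 2 / INR m ^ 2 * (INR (S (S m * N)) * C) <= e.
Proof.
  intros HC He.
  destruct (INR_archimed e (2 * (2 * INR N + 1) * C)) as [m0 Hm0]; [lra|].
  exists (S m0). split; [lia|]. set (k := S m0).
  assert (Hk : INR k = INR m0 + 1) by apply S_INR.
  assert (Hk1 : 1 <= INR k) by (pose proof (pos_INR m0); lra).
  assert (Hcount : INR (S (S k * N)) <= INR k * (2 * INR N + 1)).
  { rewrite S_INR, mult_INR, S_INR. pose proof (pos_INR N). nra. }
  assert (Hke : 2 * (2 * INR N + 1) * C <= INR k * e) by (rewrite Hk; lra).
  apply (Rmult_le_reg_l (INR k ^ 2)); [nra|].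
  replace (INR k ^ 2 * (2 / INR k ^ 2 * (INR (S (S k * N)) * C)))
    with (2 * (INR (S (S k * N)) * C)) by (field; lra).
  pose proof (Rmult_le_compat_r C _ _ HC Hcount) as Hc1.
  pose proof (Rmult_le_compat_l (INR k) _ _ ltac:(lra) Hke) as Hc2.
  replace (INR k * (INR k * e)) with (INR k ^ 2 * e) in Hc2 by ring.
  replace (INR k * (2 * (2 * INR N + 1) * C)) with (2 * (INR k * (2 * INR N + 1) * C)) in Hc2
    by ring.
  lra.
Qed.

Theorem proposition5p03 :
  forall K : op, compact_op K ->
  forall eps : R, 0 < eps ->
  exists (A B : op) (k : nat),
    compact_op A /\ compact_op B /\ (1 <= k)%nat /\
    pow_zero A k /\ pow_zero B k /\
    opnorm_lt (op_sub K (commutator A B)) eps.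
Proof.
  intros K HK eps Heps. pose proof (proj1 HK) as HKb.
  destruct (bounded_op_sqnorm_bound K HKb) as [MK [HMK0 HMK]].
  set (d := eps ^ 2 / 16). assert (Hd : 0 < d) by (unfold d; nra).
  destruct (compact_proj_tail_small K HK d Hd) as [N1 HN1].
  destruct (proj_tail_compact_small K HK d Hd) as [N2 HN2].
  set (N := S (Nat.max N1 N2)).
  destruct (defect_coefficient_small N (MK * INR (S N)) (eps ^ 2 / 4)) as [m [Hm Hdefect]].
  { pose proof (pos_INR (S N)). nra. }
  { nra. }
  exists (block_shift N m), (weighted_back K N m), (S m).
  split; [apply block_shift_compact|].
  split; [apply (weighted_back_compact K MK); auto; unfold N; lia|].
  split; [lia|].
  split; [apply block_shift_nilpotent|].
  split; [apply (weighted_back_nilpotent K); auto; unfold N; lia|].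
  apply (opnorm_lt_of_sqnorm_le _ (eps ^ 2 / 2)); [nra | nra | exact Heps |].
  intros x Hx.
  eapply Rle_trans; [apply (sqnorm_approx_error_le K MK); auto; unfold N; lia|].
  pose proof (HN1 N ltac:(unfold N; lia) x Hx). pose proof (HN2 N ltac:(unfold N; lia) x Hx).
  pose proof (Rmult_le_compat_r _ _ _ (sqnorm_ge0 x Hx) Hdefect).
  unfold d in *. lra.
Qed.
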